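(* Let $T:[e,+\infty)\to[0,+\infty)$ be a non-decreasing continuous function such that $$\sigma_2^{\log}:=\limsup_{r\to+\infty}\frac{\log^+\log^+T(r)}{\log\log r}<1,$$ and let $\delta\in(0,1-\sigma_2^{\log})$. Then $$T(r\log r)=T(r)+o\!\left(\frac{T(r)}{(\log r)^{\delta}}\right)$$ as $r\to\infty$ outside a set $F\subset[e,\infty)$ satisfying $\int_{F\cap[e,+\infty)}\frac{dt}{t\log t}<+\infty$.
   Context: $\log^+A=\max\{0,\log A\}$ for $A\ge 0$. *)

From HB Require Import structures.
From mathcomp Require Import all_boot all_order all_algebra.
From mathcomp Require Import all_classical all_reals all_analysis.
Set Implicit Arguments. Unset Strict Implicit. Unset Printing Implicit Defensive.
Import Order.TTheory GRing.Theory Num.Theory.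
Import numFieldNormedType.Exports.
Local Open Scope classical_set_scope.
Local Open Scope ring_scope.

Definition logp {R : realType} (A : R) : R := if 1 < A then ln A else 0.

Definition sigma2log {R : realType} (T : R -> R) : \bar R :=
  limf_esup (fun r : R => (logp (logp (T r)) / ln (ln r))%:E) (pinfty_nbhs R).

From HB Require Import structures.
From mathcomp Require Import all_boot all_order all_algebra.
From mathcomp Require Import all_classical all_reals all_analysis.
From mathcomp Require Import ring lra measurable_realfun.
Import Order.TTheory GRing.Theory Num.Theory.
Import numFieldNormedType.Exports.
Local Open Scope classical_set_scope.
Local Open Scope ring_scope.
Set Implicit Arguments. Unset Strict Implicit. Unset Printing Implicit Defensive.

(* Let L_0 >= e, L_(k+1) = L_k + ln L_k and r_k = exp L_k, so that r_(k+1) = r_k ln r_k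
   and the block [r_k, r_(k+1)) has measure ln L_(k+1) - ln L_k <= ln L_k / L_k for
   dt / (t ln t).  For r in block k we have r <= r ln r <= r_(k+2), so whenever
   T(r_(k+2)) <= T(r_k) (1 + L_k^(-d)) with delta < d, monotonicity gives
   T(r ln r) - T(r) <= T(r) L_k^(-d) = o(T(r) / (ln r)^delta).
   The exceptional set is the union of the remaining, bad, blocks.  As sigma_2^log(T) < c
   with c + delta < 1, ln T(r) <= 1 + (ln r)^c; on a bad block a_k = ln T(r_k) + D grows
   by at least L_k^(-d) / 2 up to a_(k+2) = O(L_k^c), and convexity of a |-> a^(-q) turns
   this into ln L_k / L_k <= K (a_k^(-q) - a_(k+2)^(-q)) once d + c (q + 1) < 1.  These
   bounds telescope, so the bad blocks have finite measure.
   Powers x^a of positive reals are written [expR (a * ln x)]. *)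

Section Elementary.
Variable R : realType.
Implicit Types (b q t u x y : R).

Lemma ln_ge1 x : expR 1 <= x -> 1 <= ln x.
Proof.
move=> ex; have x0 : 0 < x by apply: lt_le_trans (expR_gt0 _) ex.
by rewrite -(expRK 1) ler_ln ?posrE ?expR_gt0.
Qed.

Lemma ln1Dx_ge_half t : 0 <= t <= 1 -> t / 2 <= ln (1 + t).
Proof.
move=> /andP[t0 t1].
have t1p : 0 < 1 + t by lra.
have : ln (1 + (- (t / (1 + t)))) <= - (t / (1 + t)).
  by apply: le_ln1Dx; rewrite ltrN2 ltr_pdivrMr //; lra.
have -> : 1 + - (t / (1 + t)) = (1 + t)^-1 by field; rewrite gt_eqF.
rewrite lnV ?posrE // lerN2 => /(le_trans _); apply.
by rewrite ler_pdivrMr // mulrAC ler_pdivlMr //; nra.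
Qed.

Lemma le_expRM_div b u : 0 < b -> u <= expR (b * u) / b.
Proof. by move=> b0; rewrite ler_pdivlMr //; have := expR_ge1Dx (b * u); lra. Qed.

Lemma ln_addln_sub_le b x : 0 < b -> 1 <= x ->
  ln (x + ln x) - ln x <= expR ((b - 1) * ln x) / b.
Proof.
move=> b0 x1; have x0 : 0 < x by lra.
have lx0 := ln_ge0 x1.
have -> : x + ln x = x * (1 + ln x / x) by field; rewrite gt_eqF.
rewrite lnM ?posrE //; last by rewrite ltr_wpDr ?divr_ge0 // ltW.
rewrite addrC addKr; apply: le_trans (le_ln1Dx _) _.
  by apply: lt_le_trans (divr_ge0 lx0 (ltW x0)); rewrite ltrN10.
have -> : (b - 1) * ln x = b * ln x + - ln x by ring.
by rewrite expRD expRN lnK ?posrE // mulrAC ler_pM2r ?invr_gt0 // le_expRM_div.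
Qed.

(* Tangent line of the convex function [a |-> a ^ (- q)] at [y]. *)
Lemma powN_sub_ge q x y : 0 <= q -> 0 < x -> x <= y ->
  q * (y - x) * expR (- (q + 1) * ln y) <= expR (- q * ln x) - expR (- q * ln y).
Proof.
move=> q0 x0 xy; have y0 : 0 < y by apply: lt_le_trans xy.
have ratio_le : (y - x) / y <= ln y - ln x.
  have : ln (1 + (x / y - 1)) <= x / y - 1.
    by apply: le_ln1Dx; rewrite ltrBrDl addrN divr_gt0.
  rewrite addrC subrK lnM ?posrE ?invr_gt0 // lnV ?posrE //.
  have -> : (y - x) / y = 1 - x / y by rewrite mulrBl divff ?gt_eqF.
  lra.
have -> : expR (- q * ln x) = expR (- q * ln y) * expR (q * (ln y - ln x)).
  by rewrite -expRD; congr expR; ring.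
have -> : expR (- (q + 1) * ln y) = expR (- q * ln y) / y.
  have -> : - (q + 1) * ln y = - q * ln y + - ln y by ring.
  by rewrite expRD expRN lnK ?posrE.
have E0 := expR_gt0 (- q * ln y).
have -> : q * (y - x) * (expR (- q * ln y) / y) =
          expR (- q * ln y) * (q * ((y - x) / y)) by field; rewrite gt_eqF.
rewrite -[X in _ <= _ - X]mulr1 -mulrBr ler_pM2l //.
have := expR_ge1Dx (q * (ln y - ln x)); have := ler_wpM2l q0 ratio_le; lra.
Qed.

Lemma telescope2_sumr (g : nat -> R) n :
  \sum_(0 <= i < n) (g i - g i.+2) = g 0%N + g 1%N - g n - g n.+1.
Proof.
elim: n => [|n IH]; first by rewrite big_nil; lra.
by rewrite big_nat_recr //= IH; lra.
Qed.

Lemma telescope2_sumr_le (g : nat -> R) n : (forall k, 0 <= g k <= 1) ->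
  \sum_(0 <= i < n) (g i - g i.+2) <= 2.
Proof.
move=> g01; rewrite telescope2_sumr.
by have := g01 0%N; have := g01 1%N; have := g01 n; have := g01 n.+1; lra.
Qed.

End Elementary.

Section LogLogMeasure.
Variable R : realType.

Lemma continuous_inv_xlnx (x : R) :
  1 < x -> {for x, continuous (fun t : R => (t * ln t)^-1)}.
Proof.
move=> x1; have x0 : 0 < x by apply: lt_trans x1.
apply: continuousV; first by rewrite mulf_neq0 ?gt_eqF ?ln_gt0.
by apply: continuousM; [exact: cvg_id | exact: continuous_ln].
Qed.

Lemma continuous_lnln (x : R) : 1 < x -> {for x, continuous (fun t : R => ln (ln t))}.
Proof.
move=> x1; apply: continuous_comp; first exact: continuous_ln (lt_trans ltr01 x1).
by apply: continuous_ln; rewrite ln_gt0.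
Qed.

Lemma is_derive1_lnln (x : R) :
  1 < x -> is_derive x 1 (fun t : R => ln (ln t)) ((x * ln x)^-1).
Proof.
move=> x1; have x0 : 0 < x by apply: lt_trans x1.
have := is_derive1_comp (is_derive1_ln (ln_gt0 x1)) (is_derive1_ln x0).
by rewrite invfM mulrC.
Qed.

Lemma integral_inv_xlnx (a b : R) : expR 1 <= a -> a < b ->
  (\int[lebesgue_measure]_(t in `[a, b]) ((t * ln t)^-1)%:E =
   (ln (ln b) - ln (ln a))%:E)%E.
Proof.
move=> ea ab; have a1 : 1 < a by apply: lt_le_trans ea; rewrite -expR0 ltr_expR.
have gt1 x : a <= x -> 1 < x by move=> ax; apply: lt_le_trans ax.
rewrite EFinB.
apply: (@continuous_FTC2 R (fun t : R => (t * ln t)^-1) (fun t : R => ln (ln t))) => //.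
- apply: continuous_in_subspaceT => x; rewrite inE /= in_itv /= => /andP[ax _].
  exact: continuous_inv_xlnx (gt1 _ ax).
- split.
  + move=> x; rewrite in_itv /= => /andP[ax _].
    by have [] := is_derive1_lnln (gt1 _ (ltW ax)).
  + exact/cvg_at_right_filter/continuous_lnln.
  + exact/cvg_at_left_filter/continuous_lnln/gt1/ltW.
- move=> x; rewrite in_itv /= => /andP[ax _].
  by have D := is_derive1_lnln (gt1 _ (ltW ax)); rewrite derive1E derive_val.
Qed.

Lemma measurable_inv_xlnx (A : set R) : A `<=` `[expR 1, +oo[ ->
  measurable_fun A (EFin \o (fun t : R => (t * ln t)^-1)).
Proof.
move=> Ae; apply/measurable_EFinP.
have : measurable_fun (`]1, +oo[%classic : set R) (fun t : R => (t * ln t)^-1).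
  apply: open_continuous_measurable_fun; first exact: rray_open.
  by move=> x; rewrite inE /= in_itv /= andbT => /continuous_inv_xlnx.
apply: measurable_funS => // x /Ae; rewrite /= !in_itv /= !andbT.
by apply: lt_le_trans; rewrite -expR0 ltr_expR.
Qed.

Lemma inv_xlnx_ge0 (x : R) : expR 1 <= x -> (0 <= ((x * ln x)^-1)%:E)%E.
Proof.
move=> ex; rewrite lee_fin invr_ge0 mulr_ge0 //; last by have := ln_ge1 ex; lra.
by apply: le_trans ex; apply: ltW; exact: expR_gt0.
Qed.

End LogLogMeasure.

Definition lnshift_seq {R : realType} (L0 : R) (n : nat) : R :=
  iter n (fun x => x + ln x) L0.

Section LnShiftSeq.
Variables (R : realType) (L0 : R).
Hypothesis eL0 : expR 1 <= L0.
Local Notation L := (lnshift_seq L0).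

Lemma lnshift_seqS k : L k.+1 = L k + ln (L k).
Proof. by rewrite /lnshift_seq iterS. Qed.

Lemma lnshift_seq_ge_e k : expR 1 <= L k.
Proof. by elim: k => [//|k IH]; rewrite lnshift_seqS; have := ln_ge1 IH; lra. Qed.

Lemma lnshift_seq_gt0 k : 0 < L k.
Proof. exact: lt_le_trans (expR_gt0 _) (lnshift_seq_ge_e k). Qed.

Lemma lnshift_seq_ge1 k : 1 <= L k.
Proof. by apply: le_trans (lnshift_seq_ge_e k); rewrite ltW ?expR_gt1. Qed.

Lemma lnshift_seq_ln_ge1 k : 1 <= ln (L k).
Proof. exact: ln_ge1 (lnshift_seq_ge_e k). Qed.

Lemma lnshift_seqS_ge k : L k + 1 <= L k.+1.
Proof. by rewrite lnshift_seqS; have := lnshift_seq_ln_ge1 k; lra. Qed.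

Lemma lnshift_seqS_le_double k : L k.+1 <= 2 * L k.
Proof.
by rewrite lnshift_seqS; have := ln_sublinear (lnshift_seq_gt0 k); lra.
Qed.

Lemma lnshift_seqSS_le k : L k.+2 <= 4 * L k.
Proof.
have := lnshift_seqS_le_double k; have := lnshift_seqS_le_double k.+1.
have := lnshift_seq_gt0 k; lra.
Qed.

Lemma le_lnshift_seq : {homo L : i j / (i <= j)%N >-> i <= j}.
Proof.
by apply: Order.NatMonotonyTheory.nondecnP => k; have := lnshift_seqS_ge k; lra.
Qed.

Lemma expR_lnshift_seqS k : expR (L k.+1) = expR (L k) * L k.
Proof. by rewrite lnshift_seqS expRD lnK // posrE lnshift_seq_gt0. Qed.

Lemma lnshift_seq_block x : L0 <= x -> exists k, L k <= x < L k.+1.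
Proof.
move=> L0x.
have lin k : L0 + k%:R <= L k.
  elim: k => [|k IH]; first by rewrite addr0.
  by rewrite -natr1; have := lnshift_seqS_ge k; lra.
have ex : exists n, x < L n.+1.
  exists (Num.Def.archi_bound (x - L0)).
  have := @archi_boundP _ (x - L0); rewrite subr_ge0 => /(_ L0x).
  have := lin (Num.Def.archi_bound (x - L0)).+1; rewrite -natr1; lra.
case: (ex_minnP ex) => m xm m_min; exists m; rewrite xm andbT.
case: m xm m_min => [|m] _ m_min //.
by rewrite leNgt; apply/negP => /m_min; rewrite ltnn.
Qed.

End LnShiftSeq.

Section LogarithmicOrder.
Variable R : realType.
Implicit Types (A c v : R) (T : R -> R).

Lemma logp_ge0 A : 0 <= logp A.
Proof. by rewrite /logp; case: ifP => // /ltW; exact: ln_ge0. Qed.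

Lemma ln_le_logp A : ln A <= logp A.
Proof. by rewrite /logp; case: ifPn => //; rewrite -leNgt; exact: ln_le0. Qed.

Lemma ln_le_of_logp_logp_lt A v : logp (logp A) < v -> ln A <= 1 + expR v.
Proof.
move=> lt_v; apply: le_trans (ln_le_logp A) _.
have := expR_gt0 v; case: (ltrP 1 (logp A)) => [A1|]; last lra.
move: lt_v; rewrite /logp A1 -ltr_expR lnK ?posrE; last exact: lt_trans A1.
lra.
Qed.

Lemma sigma2log_lt_ln_bound T c : (sigma2log T < c%:E)%E ->
  0 < c /\ exists R1, expR 1 < R1 /\
    forall r, R1 <= r -> ln (T r) <= 1 + expR (c * ln (ln r)).
Proof.
rewrite /sigma2log limf_esupE => /ereal_inf_lt[_ [V [M [_ MV]] <-]] sup_lt.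
have ratio_lt r : M < r -> logp (logp (T r)) / ln (ln r) < c.
  move=> Mr; rewrite -lte_fin; apply: le_lt_trans sup_lt.
  by apply: ereal_sup_ubound; exists r => //; exact: MV.
pose R1 := Num.max M (expR 1) + 1.
have eR1 : expR 1 < R1.
  have : expR 1 <= Num.max M (expR 1) by rewrite le_max lexx orbT.
  rewrite /R1; lra.
have MR1 : M < R1.
  have : M <= Num.max M (expR 1) by rewrite le_max lexx.
  rewrite /R1; lra.
have bound r : R1 <= r -> logp (logp (T r)) < c * ln (ln r) /\ 0 < ln (ln r).
  move=> R1r; have er : expR 1 < r by apply: lt_le_trans R1r.
  have lnr1 : 1 < ln r.
    by rewrite -(expRK 1) ltr_ln ?posrE ?expR_gt0 //; exact: lt_trans er.
  have lnlnr0 : 0 < ln (ln r) by rewrite ln_gt0.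
  by split => //; rewrite -ltr_pdivrMr //; apply/ratio_lt/lt_le_trans/R1r.
split.
  have [lt_c lnln0] := bound R1 (lexx _).
  by rewrite -(pmulr_lgt0 _ lnln0); apply: le_lt_trans (logp_ge0 _) lt_c.
by exists R1; split => // r /bound[/ln_le_of_logp_logp_lt].
Qed.

Lemma sigma_lt_exponent (s : \bar R) (delta : R) : (s < 1%:E)%E ->
  (delta%:E < 1%:E - s)%E -> exists c : R, (s < c%:E)%E /\ c + delta < 1.
Proof.
case: s => [r| |] s1 ds.
- exists ((r + 1 - delta) / 2).
  by rewrite -EFinB lte_fin in ds; rewrite lte_fin; split; lra.
- by rewrite ltNge leey in s1.
- by exists (- delta); split; [exact: ltNyr | lra].
Qed.

(* [d] leaves room above [delta]; the relation makes [L ^ (- d) * (L ^ c) ^ (- q - 1)]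
   equal to [L ^ (b - 1)], which dominates [ln L / L]. *)
Lemma exponents_split (c delta : R) : 0 < c -> 0 < delta -> c + delta < 1 ->
  exists d q b : R, [/\ delta < d, 0 < q, 0 < b & d + c * (q + 1) = 1 - b].
Proof.
move=> c0 delta0 cdelta; pose d := (delta + 1 - c) / 2; pose b := (1 - d - c) / 2.
exists d, (b / c), b; split; rewrite /b /d ?divr_gt0 //; try lra.
have -> : c * ((1 - (delta + 1 - c) / 2 - c) / 2 / c + 1) =
          (1 - (delta + 1 - c) / 2 - c) / 2 + c by field; rewrite gt_eqF.
lra.
Qed.

End LogarithmicOrder.

Section BlockEstimates.
Variable R : realType.

Lemma ln_gap_of_ratio (T0 T2 th : R) : 0 < T0 -> 0 <= th <= 1 ->
  T0 * (1 + th) <= T2 -> ln T0 + th / 2 <= ln T2.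
Proof.
move=> T00 th01 le_T2; have /andP[th0 _] := th01.
have th1 : 0 < 1 + th by lra.
have T0th : 0 < T0 * (1 + th) by rewrite mulr_gt0.
have : ln (T0 * (1 + th)) <= ln T2 by rewrite ler_ln ?posrE // (lt_le_trans T0th).
by rewrite lnM ?posrE //; have := ln1Dx_ge_half th01; lra.
Qed.

Lemma ln_growth_le (c D L L2 T2 : R) : 0 < c -> 1 <= L -> 0 < L2 <= 4 * L ->
  ln T2 <= 1 + expR (c * ln L2) ->
  ln T2 + D <= (1 + `|D| + expR (c * ln 4)) * expR (c * ln L).
Proof.
move=> c0 L1 /andP[L20 L24] lnT2.
have L0 : 0 < L by lra.
have lnL2 : ln L2 <= ln 4 + ln L by rewrite -lnM ?posrE // ler_ln ?posrE //; lra.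
have X1 : 1 <= expR (c * ln L) by rewrite -expR0 ler_expR mulr_ge0 ?ln_ge0 // ltW.
have : expR (c * ln L2) <= expR (c * ln 4) * expR (c * ln L).
  by rewrite -expRD ler_expR -mulrDr ler_pM2l.
have := ler_norm D; have := normr_ge0 D; have := expR_gt0 (c * ln 4); nra.
Qed.

(* Read [l] as [ln L]: a gap [a2 - a0 >= L ^ (- d) / 2] below [M L ^ c] lowers
   [a ^ (- q)] by at least a multiple of [L ^ (b - 1)]. *)
Lemma power_gap_lower (c d q b M l a0 a2 : R) :
  0 < q -> 0 < b -> d + c * (q + 1) = 1 - b -> 0 < M -> 0 < a0 ->
  a0 + expR (- d * l) / 2 <= a2 -> a2 <= M * expR (c * l) ->
  expR ((b - 1) * l) / b <=
    2 * expR ((q + 1) * ln M) / (q * b) * (expR (- q * ln a0) - expR (- q * ln a2)).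
Proof.
move=> q0 b0 dcqb M0 a00 gap a2M.
have a0a2 : a0 <= a2 by have := expR_gt0 (- d * l); lra.
have a20 : 0 < a2 by lra.
set K := 2 * expR ((q + 1) * ln M) / (q * b).
have K0 : 0 < K by rewrite divr_gt0 ?mulr_gt0 ?expR_gt0.
have lna2 : ln a2 <= ln M + c * l.
  by rewrite -[c * l]expRK -lnM ?posrE ?expR_gt0 // ler_ln ?posrE ?mulr_gt0 ?expR_gt0.
have -> : expR ((b - 1) * l) / b =
    K * (q * (expR (- d * l) / 2) * expR (- (q + 1) * (ln M + c * l))).
  have -> : expR ((b - 1) * l) = expR ((q + 1) * ln M) *
      expR (- (q + 1) * (ln M + c * l)) * expR (- d * l).
    rewrite -!expRD; congr expR.
    have -> : b - 1 = - d - c * (q + 1) by lra.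
    ring.
  by rewrite /K; field; rewrite !gt_eqF.
rewrite ler_pM2l //; apply: le_trans (powN_sub_ge (ltW q0) a00 a0a2).
apply: ler_pM.
- by rewrite mulr_ge0 ?divr_ge0 ?expR_ge0 // ltW.
- exact: expR_ge0.
- by rewrite ler_pM2l //; lra.
- by rewrite ler_expR ler_nM2l; lra.
Qed.

Lemma bad_block_bound (c d q b D L L2 T0 T2 : R) :
  0 < c -> 0 < q -> 0 < b -> d + c * (q + 1) = 1 - b -> 0 <= d ->
  1 <= L -> L <= L2 <= 4 * L -> 0 < T0 -> 0 < ln T0 + D ->
  ln T2 <= 1 + expR (c * ln L2) ->
  T0 * (1 + expR (- d * ln L)) <= T2 ->
  ln (L + ln L) - ln L <=
   2 * expR ((q + 1) * ln (1 + `|D| + expR (c * ln 4))) / (q * b) *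
   (expR (- q * ln (ln T0 + D)) - expR (- q * ln (ln T2 + D))).
Proof.
move=> c0 q0 b0 dcqb d0 L1 /andP[LL2 L24] T00 a00 lnT2 bad.
have th01 : 0 <= expR (- d * ln L) <= 1.
  by rewrite expR_ge0 -expR0 ler_expR mulNr oppr_le0 mulr_ge0 ?ln_ge0.
have M0 : 0 < 1 + `|D| + expR (c * ln 4).
  by have := normr_ge0 D; have := expR_gt0 (c * ln 4); lra.
have gap : ln T0 + D + expR (- d * ln L) / 2 <= ln T2 + D.
  by have := ln_gap_of_ratio T00 th01 bad; lra.
have L2_range : 0 < L2 <= 4 * L by rewrite L24 andbT; lra.
have a2M := ln_growth_le D c0 L1 L2_range lnT2.
exact: le_trans (ln_addln_sub_le b0 L1) (power_gap_lower q0 b0 dcqb M0 a00 gap a2M).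
Qed.

Lemma decay_mul_powR_le (delta d eps L l : R) :
  0 < delta < d -> 0 < eps -> 0 < L -> 1 <= l <= 2 * L ->
  (delta * ln 2 - ln eps) / (d - delta) <= ln L ->
  expR (- d * ln L) * l `^ delta <= eps.
Proof.
move=> /andP[delta0 dd] eps0 L0 /andP[l1 l2L].
rewrite ler_pdivrMr ?subr_gt0 // => lnL_big.
rewrite /powR gt_eqF; last lra.
rewrite -expRD -[X in _ <= X](@lnK _ eps) ?posrE // ler_expR.
have : ln l <= ln 2 + ln L by rewrite -lnM ?posrE // ler_ln ?posrE //; lra.
nra.
Qed.

End BlockEstimates.

Section ExceptionalBlocks.
Variables (R : realType) (T : R -> R) (L0 d : R).
Hypothesis Tmono : forall x y : R, expR 1 <= x -> x <= y -> T x <= T y.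
Hypothesis Tnn : forall r : R, expR 1 <= r -> 0 <= T r.
Hypothesis eL0 : expR 1 <= L0.
Local Notation L := (lnshift_seq L0).

(* Block [k] is [[exp L_k, exp L_(k+1))], so that [r ln r] lies at most two blocks
   further than [r]. *)
Definition bad_block k :=
  T (expR (L k)) * (1 + expR (- d * ln (L k))) < T (expR (L k.+2)).

Definition exceptional_block k : set R :=
  if bad_block k then `[expR (L k), expR (L k.+1)[%classic else set0.

Definition exceptional_set : set R := \bigcup_k exceptional_block k.

Lemma expR_lnshift_seq_ge_e k : expR 1 <= expR (L k).
Proof.
rewrite ler_expR; apply: le_trans (lnshift_seq_ge_e eL0 k).
by rewrite -expR0 ler_expR.
Qed.

Lemma le_expR_lnshift_seq i j : (i <= j)%N -> expR (L i) <= expR (L j).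
Proof. by move=> ij; rewrite ler_expR le_lnshift_seq. Qed.

Lemma exceptional_blockP k x :
  exceptional_block k x -> expR (L k) <= x < expR (L k.+1).
Proof. by rewrite /exceptional_block; case: ifP => //= _; rewrite in_itv. Qed.

Lemma exceptional_set_sub : exceptional_set `<=` `[expR 1, +oo[.
Proof.
move=> x [k _ /exceptional_blockP /andP[kx _]]; rewrite /= in_itv /= andbT.
exact: le_trans (expR_lnshift_seq_ge_e k) kx.
Qed.

Lemma measurable_exceptional_block k : measurable (exceptional_block k).
Proof. by rewrite /exceptional_block; case: ifP. Qed.

Lemma measurable_exceptional_set : measurable exceptional_set.
Proof. by apply: bigcup_measurable => k _; exact: measurable_exceptional_block. Qed.

Lemma trivIset_exceptional_block : trivIset setT exceptional_block.
Proof.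
move=> i j _ _ [x [/exceptional_blockP/andP[ix xi] /exceptional_blockP/andP[jx xj]]].
case: (ltngtP i j) => // ij; have := le_expR_lnshift_seq ij.
- by move=> /(lt_le_trans xi)/(le_lt_trans jx); rewrite ltxx.
- by move=> /(lt_le_trans xj)/(le_lt_trans ix); rewrite ltxx.
Qed.

Lemma good_block_increment k r :
  expR (L k) <= r < expR (L k.+1) -> ~~ bad_block k ->
  `|T (r * ln r) - T r| <= T r * expR (- d * ln (L k)).
Proof.
move=> /andP[kr rk] good.
have er : expR 1 <= r := le_trans (expR_lnshift_seq_ge_e k) kr.
have r0 : 0 < r by apply: lt_le_trans (expR_gt0 1) er.
have lnr1 := ln_ge1 er.
have r_rlnr : r <= r * ln r by rewrite ler_peMr // ltW.
have rlnr_k2 : r * ln r <= expR (L k.+2).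
  rewrite (expR_lnshift_seqS eL0); apply: ler_pM; rewrite ?ltW //; first lra.
  by rewrite -ltr_expR lnK ?posrE.
have T_r := Tmono er r_rlnr.
have T_k2 := Tmono (le_trans er r_rlnr) rlnr_k2.
have T_k := Tmono (expR_lnshift_seq_ge_e k) kr.
have th0 := expR_ge0 (- d * ln (L k)).
have T_k0 := Tnn (expR_lnshift_seq_ge_e k).
move: good; rewrite /bad_block -leNgt => good.
rewrite ger0_norm ?subr_ge0 //; nra.
Qed.

Lemma exceptional_set_small_increment (delta : R) : 0 < delta < d ->
  forall eps : R, 0 < eps -> \forall r \near +oo, ~ exceptional_set r ->
    `|T (r * ln r) - T r| <= eps * (T r / (ln r) `^ delta).
Proof.
move=> delta_d eps eps0.
pose Th := (delta * ln 2 - ln eps) / (d - delta).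
exists (expR (2 * expR Th) + expR L0); split; first by rewrite num_real.
move=> r r_big r_good.
have L0r : expR L0 < r by apply: le_lt_trans r_big; rewrite lerDr expR_ge0.
have Thr : expR (2 * expR Th) < r by apply: le_lt_trans r_big; rewrite lerDl expR_ge0.
have r0 : 0 < r by apply: lt_trans (expR_gt0 _) L0r.
have lnrK : expR (ln r) = r by rewrite lnK // posrE.
have [|k /andP[k_lnr lnr_k]] := lnshift_seq_block eL0 (x := ln r).
  by rewrite -ler_expR lnrK ltW.
have block_r : expR (L k) <= r < expR (L k.+1).
  by rewrite -lnrK ler_expR ltr_expR k_lnr lnr_k.
have good : ~~ bad_block k.
  apply/negP => bad; apply: r_good; exists k => //.
  by rewrite /exceptional_block bad /= in_itv.
have er : expR 1 <= r.
  by case/andP: block_r => kr _; apply: le_trans kr; exact: expR_lnshift_seq_ge_e.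
have lnr1 : 1 <= ln r := ln_ge1 er.
have lnr_2Lk : ln r <= 2 * L k.
  exact: ltW (lt_le_trans lnr_k (lnshift_seqS_le_double eL0 k)).
have Th_lnLk : Th <= ln (L k).
  rewrite -ler_expR lnK ?posrE ?(lnshift_seq_gt0 eL0) //.
  have : 2 * expR Th < ln r by rewrite -ltr_expR lnrK.
  lra.
have decay := decay_mul_powR_le delta_d eps0 (lnshift_seq_gt0 eL0 k)
  (introT andP (conj lnr1 lnr_2Lk)) Th_lnLk.
have lnr_delta0 : 0 < (ln r) `^ delta by rewrite powR_gt0 //; lra.
apply: le_trans (good_block_increment block_r good) _.
by rewrite mulrA [eps * _]mulrC -mulrA ler_wpM2l ?Tnn ?ler_pdivlMr.
Qed.

Section ExceptionalMeasure.
Variables (c q b : R).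
Hypotheses (c0 : 0 < c) (q0 : 0 < q) (b0 : 0 < b) (d0 : 0 <= d).
Hypothesis dcqb : d + c * (q + 1) = 1 - b.
Hypothesis growth : forall r, expR L0 <= r -> ln (T r) <= 1 + expR (c * ln (ln r)).
Hypothesis T_L0 : 0 < T (expR L0).

Local Notation a k := (ln (T (expR (L k))) + (1 - ln (T (expR L0)))).
Local Notation K := (2 * expR ((q + 1) *
  ln (1 + `|1 - ln (T (expR L0))| + expR (c * ln 4))) / (q * b)).
Local Notation G x := (expR (- q * ln x)).

Lemma T_lnshift_seq_gt0 k : 0 < T (expR (L k)).
Proof.
apply: lt_le_trans T_L0 (Tmono (expR_lnshift_seq_ge_e 0) _).
exact: le_expR_lnshift_seq (leq0n k).
Qed.

Lemma le_shifted_lnT i j : (i <= j)%N -> a i <= a j.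
Proof.
move=> ij; rewrite lerD2r ler_ln ?posrE ?T_lnshift_seq_gt0 //.
exact: Tmono (expR_lnshift_seq_ge_e i) (le_expR_lnshift_seq ij).
Qed.

Lemma shifted_lnT_ge1 k : 1 <= a k.
Proof. by apply: le_trans (le_shifted_lnT (leq0n k)); rewrite addrC subrK. Qed.

Lemma G_shifted_lnT_le1 k : G (a k) <= 1.
Proof.
by rewrite expR_le1 mulNr oppr_le0 (mulr_ge0 (ltW q0)) // ln_ge0 // shifted_lnT_ge1.
Qed.

Lemma G_shifted_lnT_antitone k : G (a k.+2) <= G (a k).
Proof.
have a_pos j : 0 < a j by apply: lt_le_trans ltr01 (shifted_lnT_ge1 j).
rewrite ler_expR ler_nM2l ?oppr_lt0 // ler_ln ?posrE ?a_pos //.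
exact/le_shifted_lnT/leqW/leqnSn.
Qed.

Lemma exceptional_block_integral_le k :
  (\int[lebesgue_measure]_(x in exceptional_block k) ((x * ln x)^-1)%:E <=
   (K * (G (a k) - G (a k.+2)))%:E)%E.
Proof.
have K0 : 0 <= K by rewrite divr_ge0 ?mulr_ge0 ?expR_ge0 // ltW.
have Gk2k := G_shifted_lnT_antitone k.
rewrite /exceptional_block; case: ifP => bad; last first.
  by rewrite integral_set0 lee_fin mulr_ge0 ?subr_ge0.
have ek := expR_lnshift_seq_ge_e k.
have r_lt : expR (L k) < expR (L k.+1).
  by rewrite ltr_expR (lt_le_trans _ (lnshift_seqS_ge eL0 k)) // ltrDl.
apply: le_trans (ge0_subset_integral _ _ _ _ _ _) _.
- exact: measurable_itv.
- exact: (measurable_itv `[expR (L k), expR (L k.+1)]).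
- apply: measurable_inv_xlnx => x; rewrite /= !in_itv /= andbT => /andP[kx _].
  exact: le_trans ek kx.
- move=> x; rewrite /= in_itv /= => /andP[kx _]; apply: inv_xlnx_ge0.
  exact: le_trans ek kx.
- by apply: subset_itvl; rewrite bnd_simp.
rewrite integral_inv_xlnx // !expRK lee_fin lnshift_seqS.
apply: (bad_block_bound (L2 := L k.+2) c0 q0 b0 dcqb d0 (lnshift_seq_ge1 eL0 k))
  (T_lnshift_seq_gt0 k) _ _ (ltW bad).
- by rewrite le_lnshift_seq ?lnshift_seqSS_le // leqW.
- by apply: lt_le_trans ltr01 _; rewrite shifted_lnT_ge1.
- by have := growth (le_expR_lnshift_seq (leq0n k.+2)); rewrite expRK.
Qed.

Lemma exceptional_set_integral_lt_pinfty :
  (\int[lebesgue_measure]_(x in exceptional_set) ((x * ln x)^-1)%:E < +oo)%E.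
Proof.
have block_ge0 n x : exceptional_block n x -> (0 <= ((x * ln x)^-1)%:E)%E.
  move=> /exceptional_blockP/andP[nx _]; apply: inv_xlnx_ge0.
  exact: le_trans (expR_lnshift_seq_ge_e n) nx.
rewrite ge0_integral_bigcup //; first last.
- exact: trivIset_exceptional_block.
- by move=> x /exceptional_set_sub; rewrite /= in_itv /= andbT; exact: inv_xlnx_ge0.
- exact: measurable_inv_xlnx exceptional_set_sub.
- exact: measurable_exceptional_block.
apply: (@le_lt_trans _ _ (2 * K)%:E); last exact: ltry.
apply: lime_le.
  by apply: is_cvg_nneseries => n _ _; apply: integral_ge0; exact: block_ge0.
apply: nearW => n.
apply: le_trans (lee_sum _ (fun i _ => exceptional_block_integral_le i)) _.
rewrite sumEFin lee_fin -mulr_sumr [X in _ <= X]mulrC.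
apply: ler_wpM2l; first by rewrite divr_ge0 ?mulr_ge0 ?expR_ge0 // ltW.
apply: telescope2_sumr_le => k.
by rewrite expR_ge0 G_shifted_lnT_le1.
Qed.

End ExceptionalMeasure.

End ExceptionalBlocks.

Lemma vanishing_small_increment {R : realType} (T : R -> R) (delta eps : R) :
  (forall x, expR 1 <= x -> T x = 0) ->
  \forall r \near +oo, `|T (r * ln r) - T r| <= eps * (T r / (ln r) `^ delta).
Proof.
move=> T0; exists (expR 1); split; first by rewrite num_real.
move=> r /ltW er; have r0 : 0 <= r by apply: le_trans er; exact: expR_ge0.
have erlnr : expR 1 <= r * ln r by apply: le_trans er (ler_peMr r0 (ln_ge1 er)).
by rewrite !T0 // subr0 normr0 mul0r mulr0.
Qed.

Theorem lemma3p1 (R : realType) (T : R -> R)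
  (Tmono : forall x y : R, expR 1 <= x -> x <= y -> T x <= T y)
  (Tcont : {within `[expR 1, +oo[, continuous T})
  (Tnn : forall r : R, expR 1 <= r -> 0 <= T r)
  (Hsig : (sigma2log T < 1%:E)%E)
  (delta : R) (Hd0 : 0 < delta) (Hd1 : (delta%:E < 1%:E - sigma2log T)%E) :
  exists F : set R,
    [/\ measurable F, F `<=` `[expR 1, +oo[,
        (\int[lebesgue_measure]_(t in F) ((t * ln t)^-1)%:E < +oo)%E &
        forall eps : R, 0 < eps ->
          \forall r \near +oo%R, ~ F r ->
            `|T (r * ln r) - T r| <= eps * (T r / (ln r) `^ delta)].
Proof.
have [c [sig_c cdelta]] := sigma_lt_exponent Hsig Hd1.
have [c0 [R1 [eR1 growth]]] := sigma2log_lt_ln_bound sig_c.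
have [d [q [b [delta_d q0 b0 dcqb]]]] := exponents_split c0 Hd0 cdelta.
have [[x1 [ex1 Tx1]] | noTpos] := pselect (exists x, expR 1 <= x /\ 0 < T x); last first.
  have T0 x : expR 1 <= x -> T x = 0.
    move=> ex; apply/eqP; rewrite eq_le Tnn // andbT leNgt.
    by apply/negP => Tx; apply: noTpos; exists x.
  exists set0; split => //; first by rewrite integral_set0 ltry.
  by move=> eps _; apply: filterS (vanishing_small_increment delta eps T0) => r ? _.
pose L0 := Num.max (expR 1) (ln (Num.max R1 x1)).
have eL0 : expR 1 <= L0 by rewrite le_max lexx.
have R1x1_L0 : Num.max R1 x1 <= expR L0.
  rewrite -[X in X <= _]lnK ?posrE ?lt_max ?(lt_trans (expR_gt0 1) eR1) //.
  by rewrite ler_expR le_max lexx orbT.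
have [R1L0 x1L0] : R1 <= expR L0 /\ x1 <= expR L0.
  by move: R1x1_L0; rewrite ge_max => /andP.
exists (exceptional_set T L0 d); split.
- exact: measurable_exceptional_set.
- exact: exceptional_set_sub.
- have d0 : 0 <= d by apply: le_trans (ltW Hd0) (ltW delta_d).
  have growth_L0 r : expR L0 <= r -> ln (T r) <= 1 + expR (c * ln (ln r)).
    by move=> L0r; apply: growth; exact: le_trans L0r.
  have T_L0 : 0 < T (expR L0) by apply: lt_le_trans Tx1 (Tmono _ _ ex1 x1L0).
  exact (exceptional_set_integral_lt_pinfty Tmono eL0 c0 q0 b0 d0 dcqb growth_L0 T_L0).
- by move=> eps eps0; apply: exceptional_set_small_increment; rewrite ?Hd0.
Qed.
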